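(* Let $n > m\ge 1$ be integers with $n\ge 2m$, let $\mathbb{S}\subseteq\mathbb{R}$, and let $f:\mathbb{S}\to\mathbb{R}^n$ be a function. Let $U=\begin{bmatrix}U_1 & U_2\end{bmatrix}\in\mathbb{R}^{n\times n}$ be an orthogonal matrix with $U_1\in\mathbb{R}^{n\times m}$, $U_2\in\mathbb{R}^{n\times(n-m)}$, whose columns form a complete basis of the range of $f(\mu)$ for all $\mu\in\mathbb{S}$. Let $P\in\mathbb{R}^{n\times m}$ be a selection operator such that $P^TU_1$ is invertible, and let $\sigma_1\ge\cdots\ge\sigma_m>0$ be the singular values of $P^TU_1$. Let $\mu_1,\dots,\mu_N\in\mathbb{S}$, $f_i:=f(\mu_i)$, $\tilde f_i:=U_1(P^TU_1)^{-1}P^Tf_i$, $\hat f_i:=U_1U_1^Tf_i$, and $X:=U_2^T\begin{bmatrix} f_1 & f_2 & \cdots & f_N\end{bmatrix}\in\mathbb{R}^{(n-m)\times N}$. Let $\lambda_1(XX^T)\ge\lambda_2(XX^T)\ge\cdots\ge\lambda_{n-m}(XX^T)\ge0$ be the eigenvalues of $XX^T$. Then $$\frac1N\sum_{i=1}^N\lVert\tilde f_i-\hat f_i\rVert_2^2\le\frac1N\sum_{i=1}^m\left(\sigma_{m-i+1}^{-2}-1\right)\lambda_i(XX^T).$$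
   Context: A selection (mask) operator $P\in\mathbb{R}^{n\times m}$ is a matrix whose columns are $m$ distinct columns of the identity matrix $\mathbb{I}_n$. $\lVert\cdot\rVert_2$ is the Euclidean norm. *)

From HB Require Import structures.
From mathcomp Require Import all_boot all_order all_algebra.
Set Implicit Arguments. Unset Strict Implicit. Unset Printing Implicit Defensive.
Import Order.TTheory GRing.Theory Num.Theory.
Local Open Scope ring_scope.

Definition selection_op (R : nzRingType) (n m : nat) (P : 'M[R]_(n, m)) : Prop :=
  exists s : 'I_m -> 'I_n, injective s /\ P = \matrix_(i, j) (i == s j)%:R.

Definition orthogonal_mx (R : nzRingType) (n k : nat) (U : 'M[R]_(n, k)) : Prop :=
  U^T *m U = 1%:M /\ U *m U^T = 1%:M.

(* lam is the list of the eigenvalues of the square matrix A, counted with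
   algebraic multiplicity (i.e. the roots of its characteristic polynomial),
   sorted in nonincreasing order. *)
Definition eigvals_desc (R : rcfType) (k : nat) (A : 'M[R]_k) (lam : seq R) : Prop :=
  size lam = k /\ sorted >=%R lam /\
  char_poly A = \prod_(x <- lam) ('X - x%:P).

(* sigma is the list of singular values of M (nonnegative square roots of the
   eigenvalues of M^T M), sorted in nonincreasing order. *)
Definition singvals_desc (R : rcfType) (k : nat) (M : 'M[R]_k) (sigma : seq R) : Prop :=
  size sigma = k /\ sorted >=%R sigma /\ all (fun s => 0 <= s) sigma /\
  char_poly (M^T *m M) = \prod_(s <- sigma) ('X - (s ^+ 2)%:P).

Definition norm2sq (R : rcfType) (k : nat) (v : 'cV[R]_k) : R :=
  \sum_(j < k) v j 0 ^+ 2.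

From HB Require Import structures.
From mathcomp Require Import all_boot all_order all_algebra.
From mathcomp Require Import ring lra zify.
Set Implicit Arguments. Unset Strict Implicit. Unset Printing Implicit Defensive.
Import Order.TTheory GRing.Theory Num.Theory.
Local Open Scope ring_scope.

(* Write A = P^T U1, B = P^T U2 and W = A^-1 B.  Because U1 U1^T + U2 U2^T = I,
   the interpolation error is f~_i - f^_i = U1 W U2^T f_i, so the total squared
   error is tr (W X X^T W^T); and because P^T P = I, A A^T + B B^T = I, whence
   W W^T = (A^T A)^-1 - I has eigenvalues sigma_i^-2 - 1.  Diagonalising
   X X^T = Q Lambda Q^T and (A^T A)^-1 = V D V^T, the matrix Z = V^T W Q has
   orthogonal rows, Z Z^T = diag (e_j) with e_j = sigma_(m-j)^-2 - 1, and the
   error is sum_(j,k) Z_jk^2 lambda_k.  The weights Z_jk^2 / e_j form a doubly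
   substochastic array (unit row sums, column sums <= 1 by Bessel's
   inequality), so Abel summation bounds the error by sum_j e_j lambda_j.  The
   real spectral theorem used twice is proved by Householder deflation. *)

Lemma sorted_ge_nth (R : numDomainType) (s : seq R) i j :
  sorted >=%R s -> (i <= j < size s)%N -> s`_j <= s`_i.
Proof.
move=> hs /andP[ij js]; apply: (sorted_leq_nth _ _ 0 hs) => //.
- by move=> b a c /= ab bc; apply: le_trans ab.
- exact: lexx.
- by rewrite inE (leq_ltn_trans ij js).
Qed.

Section WeightedSums.
Variable R : realDomainType.

Lemma ler_sum_nonincr_weights m (e y l : nat -> R) :
  (forall i j, (i <= j < m)%N -> e j <= e i) ->
  (forall i, (i < m)%N -> 0 <= e i) ->
  (forall a, (a < m)%N -> \sum_(j < a.+1) y j <= \sum_(j < a.+1) l j) ->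
  \sum_(j < m) e j * y j <= \sum_(j < m) e j * l j.
Proof.
case: m => [|m] he he0 hyl; first by rewrite !big_ord0.
pose w j := l j - y j.
have w_ge0 a : (a < m.+1)%N -> 0 <= \sum_(j < a.+1) w j.
  by move=> ha; rewrite sumrB subr_ge0 hyl.
have abel a : (a < m.+1)%N -> e a * \sum_(j < a.+1) w j <= \sum_(j < a.+1) e j * w j.
  elim: a => [|a IH] ha; first by rewrite !big_ord_recr !big_ord0 /= !add0r.
  rewrite [X in _ <= X]big_ord_recr [X in _ * X]big_ord_recr /= mulrDr lerD2r.
  apply: le_trans (IH (ltnW ha)); rewrite ler_wpM2r ?w_ge0 ?(ltnW ha) //.
  by apply: he; rewrite leqnSn ha.
rewrite -subr_ge0 -sumrB.
under eq_bigr do rewrite -mulrBr.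
by apply: le_trans (abel m _); rewrite ?mulr_ge0 ?he0 ?w_ge0.
Qed.

Lemma ler_wsum_prefix p a (c : 'I_p -> R) (l : nat -> R) :
  (a < p)%N ->
  (forall i j, (i <= j < p)%N -> l j <= l i) ->
  (forall i, (i < p)%N -> 0 <= l i) ->
  (forall i, 0 <= c i <= 1) ->
  \sum_(i < p) c i <= a.+1%:R ->
  \sum_(i < p) c i * l i <= \sum_(i < a.+1) l i.
Proof.
move=> hap hl hl0 hc hsum.
rewrite (big_ord_widen p l hap) big_mkcond /=.
have step (i : 'I_p) : c i * l i - (if (i < a.+1)%N then l i else 0)
    <= l a * (c i - (if (i < a.+1)%N then 1 else 0)).
  have /andP[c0 c1] := hc i.
  case: ifP => hi.
    rewrite -subr_ge0.
    have -> : l a * (c i - 1) - (c i * l i - l i) = (1 - c i) * (l i - l a) by ring.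
    by rewrite mulr_ge0 // subr_ge0 // hl // -ltnS hi.
  rewrite !subr0 [l a * _]mulrC ler_wpM2l //; apply: hl; rewrite ltn_ord andbT.
  by move/negbT: hi; rewrite -leqNgt => /ltnW.
rewrite -subr_le0 [X in _ - X]big_mkcond -sumrB /=.
apply: le_trans (ler_sum _ (fun i _ => step i)) _.
rewrite -mulr_sumr sumrB -big_mkcond /= -(big_ord_widen p (fun _ => 1) hap).
by rewrite sumr_const card_ord mulr_ge0_le0 ?hl0 // subr_le0.
Qed.

Lemma ler_sum_substochastic m p (c : nat -> 'I_p -> R) (e l : nat -> R) :
  (m <= p)%N ->
  (forall j k, (j < m)%N -> 0 <= c j k) ->
  (forall j, (j < m)%N -> \sum_k c j k <= 1) ->
  (forall k, \sum_(j < m) c j k <= 1) ->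
  (forall i j, (i <= j < m)%N -> e j <= e i) -> (forall i, (i < m)%N -> 0 <= e i) ->
  (forall i j, (i <= j < p)%N -> l j <= l i) -> (forall i, (i < p)%N -> 0 <= l i) ->
  \sum_(j < m) e j * \sum_k c j k * l k <= \sum_(j < m) e j * l j.
Proof.
move=> hmp c0 crow ccol he he0 hl hl0.
apply: (ler_sum_nonincr_weights (y := fun j => \sum_k c j k * l k)) => // a ha.
rewrite exchange_big /=; under eq_bigr do rewrite -mulr_suml.
apply: (ler_wsum_prefix (c := fun k => \sum_(j < a.+1) c j k)) => // [|k|].
- exact: leq_trans hmp.
- rewrite sumr_ge0 => [|j _]; last exact/c0/(leq_trans (ltn_ord j)).
  apply: le_trans (ccol k); rewrite (big_ord_widen m (c^~ k) ha) big_mkcond /=.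
  by apply: ler_sum => j _; case: ifP => // _; rewrite c0.
- have -> : a.+1%:R = \sum_(j < a.+1) 1 :> R by rewrite sumr_const card_ord.
  rewrite exchange_big /=; apply: ler_sum => j _; exact/crow/(leq_trans (ltn_ord j)).
Qed.

End WeightedSums.

Section Gram.
Variable R : realFieldType.

Lemma mulmx_tr_diagE m p (u : 'M[R]_(m, p)) j : (u *m u^T) j j = \sum_k u j k ^+ 2.
Proof. by rewrite mxE; apply: eq_bigr => k _; rewrite mxE expr2. Qed.

Lemma mulmx_tr_diag_ge0 m p (u : 'M[R]_(m, p)) j : 0 <= (u *m u^T) j j.
Proof. by rewrite mulmx_tr_diagE sumr_ge0 // => k _; rewrite sqr_ge0. Qed.

Lemma rV_mulmx_tr_eq0 k (u : 'rV[R]_k) : ((u *m u^T) 0 0 == 0) = (u == 0).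
Proof.
apply/idP/eqP => [|->]; last by rewrite mul0mx mxE.
rewrite mulmx_tr_diagE psumr_eq0 => [/allP u0|k' _]; last exact: sqr_ge0.
apply/rowP => j; rewrite mxE; apply/eqP; rewrite -sqrf_eq0.
by have := u0 j (mem_index_enum j).
Qed.

Lemma bessel m p (Z : 'M[R]_(m, p)) (e : 'I_m -> R) (k : 'I_p) :
  Z *m Z^T = diag_mx (\row_j e j) -> \sum_j Z j k ^+ 2 / e j <= 1.
Proof.
(* [u] is the orthogonal projection of [d = e_k] onto the row space of [Z],
   and [S = <u, u> = <u, d>]; expand [0 <= <d - u, d - u>]. *)
move=> hZ; set S := \sum_j _.
pose u := \row_j (Z j k / e j) *m Z; pose d : 'rV[R]_p := delta_mx 0 k.
have hdd : (d *m d^T) 0 0 = 1 by rewrite trmx_delta mul_delta_mx mxE !eqxx.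
have hud : (u *m d^T) 0 0 = S.
  rewrite trmx_delta -colE mxE /u mxE; apply: eq_bigr => j _; rewrite mxE; ring.
have hdu : (d *m u^T) 0 0 = S by rewrite -[d]trmxK -trmx_mul mxE.
have huu : (u *m u^T) 0 0 = S.
  rewrite /u trmx_mul mulmxA -[_ *m Z *m _]mulmxA hZ mul_mx_diag mxE.
  apply: eq_bigr => j _; rewrite !mxE.
  have [->|ej] := eqVneq (e j) 0; first by rewrite invr0 !(mulr0, mul0r).
  by field.
have addE (A B : 'M[R]_1) : (A + B) 0 0 = A 0 0 + B 0 0 by rewrite mxE.
have oppE (A : 'M[R]_1) : (- A) 0 0 = - A 0 0 by rewrite mxE.
have := mulmx_tr_diag_ge0 (d - u) 0.
by rewrite linearB /= mulmxBl !mulmxBr !(addE, oppE) hdd hud hdu huu; lra.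
Qed.

Lemma mxtrace_diag_conjE m p (Z : 'M[R]_(m, p)) (l : 'rV[R]_p) :
  \tr (Z *m diag_mx l *m Z^T) = \sum_j \sum_k Z j k ^+ 2 * l 0 k.
Proof.
apply: eq_bigr => j _; rewrite mxE; apply: eq_bigr => k _.
by rewrite mul_mx_diag !mxE; ring.
Qed.

Lemma mxtrace_diag_conj_le m p (Z : 'M[R]_(m, p)) (e l : nat -> R) :
  (m <= p)%N -> Z *m Z^T = diag_mx (\row_j e j) ->
  (forall i j, (i <= j < m)%N -> e j <= e i) ->
  (forall i j, (i <= j < p)%N -> l j <= l i) -> (forall i, (i < p)%N -> 0 <= l i) ->
  \tr (Z *m diag_mx (\row_k l k) *m Z^T) <= \sum_(j < m) e j * l j.
Proof.
case: m Z => [|m] Z hmp hZ he hl hl0; first by rewrite big_ord0 /mxtrace big_ord0.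
have rowE (j : 'I_m.+1) : \sum_k Z j k ^+ 2 = e j.
  by rewrite -mulmx_tr_diagE hZ !mxE eqxx mulr1n.
have he0 i : (i < m.+1)%N -> 0 <= e i.
  by move=> hi; rewrite -(rowE (Ordinal hi)) sumr_ge0 // => k _; rewrite sqr_ge0.
(* [c] is doubly substochastic: unit row sums by [hZ], column sums below 1 by
   [bessel].  A row with [e j = 0] vanishes, matching [c j k = 0] as [0^-1 = 0]. *)
pose c j k := Z (inord j) k ^+ 2 / e j.
have ZE (j : 'I_m.+1) k : Z j k ^+ 2 = e j * c j k.
  rewrite /c inord_val; have [ej0|ej] := eqVneq (e j) 0; last by rewrite mulrC divfK.
  rewrite ej0 mul0r; apply: (psumr_eq0P (P := xpredT) (fun k _ => sqr_ge0 (Z j k))) => //.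
  by move: (rowE j); rewrite ej0.
rewrite mxtrace_diag_conjE.
under eq_bigr do under eq_bigr do rewrite ZE mxE -mulrA.
under eq_bigr do rewrite -mulr_sumr.
apply: ler_sum_substochastic => // [j k hj|j hj|k].
- by rewrite /c divr_ge0 ?sqr_ge0 ?he0.
- rewrite /c -mulr_suml; have := rowE (inord j); rewrite inordK // => ->.
  by have [->|nz] := eqVneq (e j) 0; rewrite ?invr0 ?mulr0 ?divff.
- by under eq_bigr do rewrite /c inord_val; exact: bessel hZ.
Qed.

End Gram.

Lemma char_poly_orthomx_conj (R : comNzRingType) k (H G : 'M[R]_k) :
  H^T *m H = 1%:M -> char_poly (H^T *m G *m H) = char_poly G.
Proof.
move=> hH; rewrite /char_poly /char_poly_mx.
have -> : 'X%:M - map_mx polyC (H^T *m G *m H)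
    = map_mx polyC H^T *m ('X%:M - map_mx polyC G) *m map_mx polyC H.
  rewrite mulmxBr mulmxBl !map_mxM; congr (_ - _).
  by rewrite scalar_mxC -mulmxA -map_mxM hH map_mx1 mulmx1.
rewrite !det_mulmx mulrC mulrA -det_mulmx -map_mxM mulrC.
by rewrite (mulmx1C hH) map_mx1 det1 mulr1.
Qed.

Lemma char_poly_block_scalar (R : comNzRingType) k (x : R) (G : 'M[R]_k) :
  char_poly (block_mx (x%:M : 'M_1) 0 0 G) = ('X - x%:P) * char_poly G.
Proof.
rewrite /char_poly /char_poly_mx map_block_mx !map_mx0 (scalar_mx_block 1 k).
rewrite opp_block_mx add_block_mx !oppr0 !addr0 det_ublock det_mx11.
by rewrite !mxE /= mulr1n.
Qed.

Lemma diag_mx_cons (R : nzRingType) k (x : R) (s : seq R) :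
  diag_mx (\row_(i < 1 + k) (x :: s)`_i) = block_mx x%:M 0 0 (diag_mx (\row_i s`_i)).
Proof.
have -> : (x%:M : 'M_1) = diag_mx (\row_(i < 1) x).
  by apply/matrixP => i j; rewrite !mxE (ord1 i) (ord1 j).
rewrite -diag_mx_row; congr diag_mx; apply/rowP => i; rewrite !mxE.
by case: splitP => j hj; rewrite !mxE hj // (ord1 j).
Qed.

Lemma householder (R : realFieldType) k (v : 'rV[R]_k.+1) : v *m v^T = 1%:M ->
  exists H : 'M[R]_k.+1, [/\ H^T = H, H *m H = 1%:M & delta_mx 0 0 *m H = v].
Proof.
move=> hv; set e0 : 'rV_k.+1 := delta_mx 0 0.
have [->|ve0] := eqVneq v e0; first by exists 1%:M; split; rewrite ?trmx1 ?mulmx1.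
set w := v - e0; set c := (w *m w^T) 0 0.
have c0 : c != 0 by rewrite rV_mulmx_tr_eq0 subr_eq0.
have hww : w *m w^T = c%:M := mx11_scalar _.
have e0u (u : 'rV[R]_k.+1) : (e0 *m u^T) 0 0 = u 0 0 by rewrite -rowE !mxE.
have ue0 (u : 'rV[R]_k.+1) : (u *m e0^T) 0 0 = u 0 0.
  by rewrite -[u]trmxK -trmx_mul mxE trmxK e0u.
have hc : c = 2 * (1 - v 0 0).
  have addE (A B : 'M[R]_1) : (A + B) 0 0 = A 0 0 + B 0 0 by rewrite mxE.
  have oppE (A : 'M[R]_1) : (- A) 0 0 = - A 0 0 by rewrite mxE.
  have vv : (v *m v^T) 0 0 = 1 by rewrite hv mxE.
  have e0e0 : (e0 *m e0^T) 0 0 = 1 by rewrite e0u mxE.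
  rewrite /c /w linearB /= mulmxBl !mulmxBr !(addE, oppE) vv e0e0 e0u ue0; ring.
have wE : w = v - e0 by [].
have w00 : w 0 0 = v 0 0 - 1 by rewrite wE !mxE.
clearbody w; pose a := 2 / c.
exists (1%:M - a *: (w^T *m w)); split.
- by rewrite linearB /= trmx1 linearZ /= trmx_mul trmxK.
- have sq : (w^T *m w) *m (w^T *m w) = c *: (w^T *m w).
    by rewrite mulmxA -[w^T *m w *m w^T]mulmxA hww mul_mx_scalar -scalemxAl.
  rewrite mulmxBl !mulmxBr !mul1mx !mulmx1 -scalemxAl -scalemxAr sq !scalerA.
  have -> : a * a * c = a + a by rewrite /a; field.
  by rewrite scalerDl opprB addrK subrK.
- rewrite mulmxBr mulmx1 -scalemxAr mulmxA [e0 *m w^T]mx11_scalar e0u.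
  rewrite mul_scalar_mx scalerA.
  have -> : a * w 0 0 = -1.
    have /andP[_ v1] : (2 != 0 :> R) && (1 - v 0 0 != 0).
      by rewrite -negb_or -mulf_eq0 -hc.
    by rewrite /a w00 hc; field.
  by rewrite scaleN1r opprK wE addrC subrK.
Qed.

Lemma block_diag_conj (R : comNzRingType) k1 k2 (A : 'M[R]_k1) (G Q : 'M[R]_k2) :
  (block_mx 1%:M 0 0 Q)^T *m block_mx A 0 0 G *m block_mx 1%:M 0 0 Q
  = block_mx A 0 0 (Q^T *m G *m Q).
Proof.
rewrite tr_block_mx !trmx0 trmx1 !mulmx_block.
by rewrite !(mulmx0, mul0mx, mulmx1, mul1mx, addr0, add0r).
Qed.

Lemma symmetric_row0_block (R : nzRingType) k (M : 'M[R]_(1 + k)) (x : R) :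
  M^T = M -> (delta_mx 0 0 : 'rV_(1 + k)) *m M = x *: delta_mx 0 0 ->
  M = block_mx x%:M 0 0 (drsubmx M).
Proof.
move=> hM hrow0.
have M0E j : M 0 j = x * (j == 0)%:R.
  by have /rowP/(_ j) := hrow0; rewrite -rowE !mxE eqxx.
have lshift0 : lshift k (0 : 'I_1) = 0 by apply: val_inj.
rewrite -[LHS]submxK; congr block_mx; apply/matrixP => i j; rewrite !mxE.
- by rewrite !ord1 lshift0 M0E eqxx mulr1.
- by rewrite ord1 lshift0 M0E mulr_natr.
- by rewrite ord1 -hM mxE lshift0 M0E mulr_natr.
Qed.

Section Spectral.
Variable R : rcfType.

Lemma unit_eigenvector k (G : 'M[R]_k) x : eigenvalue G x ->
  exists v : 'rV_k, v *m v^T = 1%:M /\ v *m G = x *: v.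
Proof.
case/eigenvalueP => u huG u0; set s := (u *m u^T) 0 0.
have s_gt0 : 0 < s by rewrite lt_def rV_mulmx_tr_eq0 u0 mulmx_tr_diag_ge0.
exists ((Num.sqrt s)^-1 *: u); split; last first.
  by rewrite -scalemxAl huG !scalerA mulrC.
rewrite linearZ /= -scalemxAl -scalemxAr scalerA -invfM -expr2 sqr_sqrtr ?ltW //.
by rewrite [u *m u^T]mx11_scalar -/s scale_scalar_mx mulVf ?gt_eqF.
Qed.

Theorem symmetric_spectral k (G : 'M[R]_k) (lam : seq R) :
  G^T = G -> size lam = k -> char_poly G = \prod_(x <- lam) ('X - x%:P) ->
  exists Q : 'M[R]_k, Q^T *m Q = 1%:M /\ Q^T *m G *m Q = diag_mx (\row_i lam`_i).
Proof.
elim: k G lam => [|k IH] G lam hG hs hc.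
  by exists 1%:M; split; [rewrite trmx1 mulmx1 | apply/matrixP => i []].
case: lam hs hc => [//|x lam] [hs] hc.
have /unit_eigenvector[v [hv hvG]] : eigenvalue G x.
  by rewrite eigenvalue_root_char hc big_cons rootM root_XsubC eqxx.
(* [H] sends [e_0] to the eigenvector [v], so [H^T G H] splits off [x]. *)
have [H [hHT hHH he0H]] := householder hv.
set M : 'M_(1 + k) := H^T *m G *m H.
have hMT : M^T = M by rewrite !trmx_mul trmxK hG mulmxA.
have hM : M = block_mx x%:M 0 0 (drsubmx M).
  apply: symmetric_row0_block => //.
  by rewrite /M hHT !mulmxA he0H hvG -!scalemxAl -he0H -mulmxA hHH mulmx1.
have hc' : char_poly (drsubmx M) = \prod_(y <- lam) ('X - y%:P).
  apply: (@mulfI _ ('X - x%:P)); first by rewrite polyXsubC_eq0.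
  by rewrite -char_poly_block_scalar -hM char_poly_orthomx_conj ?hHT // hc big_cons.
have hG' : (drsubmx M)^T = drsubmx M by rewrite trmx_drsub hMT.
have [Q' [hQ'o hQ'd]] := IH _ lam hG' hs hc'.
pose B : 'M_(1 + k) := block_mx 1%:M 0 0 Q'.
have hB : B^T *m M *m B = block_mx x%:M 0 0 (diag_mx (\row_i lam`_i)).
  by rewrite hM block_diag_conj hQ'd.
exists (H *m B); split.
  rewrite trmx_mul hHT mulmxA -[B^T *m H *m H]mulmxA hHH mulmx1.
  have := block_diag_conj (1%:M : 'M_1) 1%:M Q'.
  by rewrite mulmx1 hQ'o -!scalar_mx_block mulmx1.
rewrite trmx_mul !mulmxA -[B^T *m H^T *m G]mulmxA -[B^T *m (H^T *m G) *m H]mulmxA.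
by rewrite -/M hB diag_mx_cons.
Qed.

End Spectral.

Section SingularValues.
Variables (R : rcfType) (m : nat) (A : 'M[R]_m) (sigma : seq R).
Hypotheses (hA : A \in unitmx) (hsigma : singvals_desc A sigma).

Lemma singvals_spectral : exists V : 'M[R]_m,
  V^T *m V = 1%:M /\ V^T *m (A^T *m A) *m V = diag_mx (\row_j sigma`_(m - 1 - j) ^+ 2).
Proof.
case: hsigma => hsz [_ [_ hcp]].
have [|||V [hV hVd]] := @symmetric_spectral _ _ (A^T *m A) [seq s ^+ 2 | s <- rev sigma].
- by rewrite trmx_mul trmxK.
- by rewrite size_map size_rev.
- by rewrite hcp big_map big_rev.
exists V; split => //; rewrite hVd; congr diag_mx; apply/rowP => j; rewrite !mxE.
by rewrite (nth_map 0) ?nth_rev ?size_rev hsz // -subnDA add1n.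
Qed.

Lemma singvals_gt0 i : (i < m)%N -> 0 < sigma`_i.
Proof.
case: hsigma => hsz [_ [hge0 hcp]] im.
rewrite lt_def (all_nthP 0 hge0) ?hsz // andbT; apply/eqP => si0.
have : eigenvalue (A^T *m A) 0.
  rewrite eigenvalue_root_char hcp -(big_map (fun s => s ^+ 2) xpredT (fun x => 'X - x%:P)).
  rewrite root_prod_XsubC; apply/mapP; exists sigma`_i; last by rewrite si0 expr2 mul0r.
  by rewrite mem_nth ?hsz.
case/eigenvalueP => v; rewrite scale0r => hv; apply/negP; rewrite negbK.
have hAA : A^T *m A \in unitmx by rewrite unitmx_mul unitmx_tr hA.
by rewrite -[v](mulmxK hAA) hv mul0mx.
Qed.

Lemma singvals_inv_spectral : exists V : 'M[R]_m, V^T *m V = 1%:M /\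
  V^T *m (invmx A *m (invmx A)^T) *m V = diag_mx (\row_j sigma`_(m - 1 - j) ^- 2).
Proof.
have [V [hV hVd]] := singvals_spectral; exists V; split => //.
have hV' : V *m V^T = 1%:M := mulmx1C hV.
have hinv : V^T *m (invmx A *m (invmx A)^T) *m V *m (V^T *m (A^T *m A) *m V) = 1%:M.
  rewrite !mulmxA -[_ *m V *m V^T]mulmxA hV' mulmx1 -[_ *m (invmx A)^T *m A^T]mulmxA.
  by rewrite -trmx_mul mulmxV // trmx1 mulmx1 -[_ *m invmx A *m A]mulmxA mulVmx // mulmx1.
have hDD : diag_mx (\row_j sigma`_(m - 1 - j) ^+ 2) *m diag_mx (\row_j sigma`_(m - 1 - j) ^- 2)
    = 1%:M :> 'M_m.
  rewrite mulmx_diag -diag_const_mx; congr diag_mx; apply/rowP => j; rewrite !mxE.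
  by rewrite mulfV // expf_neq0 // gt_eqF // singvals_gt0 //; have := ltn_ord j; lia.
by rewrite -[LHS]mulmx1 -hDD mulmxA -hVd hinv mul1mx.
Qed.

Lemma singvals_rev_invsqr_le i j : (i <= j < m)%N ->
  sigma`_(m - 1 - j) ^- 2 <= sigma`_(m - 1 - i) ^- 2.
Proof.
case: hsigma => hsz [hsort _] /andP[ij jm].
have [hi hj] : (m - 1 - i < m)%N /\ (m - 1 - j < m)%N by split; lia.
have hle : sigma`_(m - 1 - i) <= sigma`_(m - 1 - j).
  by apply: sorted_ge_nth; rewrite // hsz hi andbT; lia.
have [si sj] := (singvals_gt0 hi, singvals_gt0 hj).
by rewrite lef_pV2 ?posrE ?exprn_gt0 // ler_pXn2r // nnegrE ltW.
Qed.

End SingularValues.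

Lemma gram_eigvals_ge0 (R : realFieldType) p N (X : 'M[R]_(p, N)) (Q : 'M[R]_p) (lam : seq R) :
  Q^T *m (X *m X^T) *m Q = diag_mx (\row_i lam`_i) -> forall i, (i < p)%N -> 0 <= lam`_i.
Proof.
move=> hQ i ip; have := mulmx_tr_diag_ge0 (Q^T *m X) (Ordinal ip).
by rewrite trmx_mul trmxK !mulmxA -[Q^T *m X *m X^T]mulmxA hQ !mxE eqxx mulr1n.
Qed.

Lemma gram_invmx_mul (R : comUnitRingType) m p (A : 'M[R]_m) (B : 'M[R]_(m, p)) :
  A \in unitmx -> A *m A^T + B *m B^T = 1%:M ->
  (invmx A *m B) *m (invmx A *m B)^T = invmx A *m (invmx A)^T - 1%:M.
Proof.
move=> hA hAB; have hBB : B *m B^T = 1%:M - A *m A^T by rewrite -hAB addrC addKr.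
rewrite trmx_mul mulmxA -[invmx A *m B *m B^T]mulmxA hBB mulmxBr mulmx1 mulmxBl.
by rewrite mulmxA mulVmx // mul1mx -trmx_mul mulVmx // trmx1.
Qed.

Theorem oblique_trace_le (R : rcfType) m p N (A : 'M[R]_m) (B : 'M[R]_(m, p))
    (X : 'M[R]_(p, N)) (sigma lam : seq R) :
  (m <= p)%N -> A \in unitmx -> A *m A^T + B *m B^T = 1%:M ->
  singvals_desc A sigma -> eigvals_desc (X *m X^T) lam ->
  \tr (invmx A *m B *m X *m (invmx A *m B *m X)^T)
  <= \sum_(i < m) (sigma`_(m - 1 - i) ^- 2 - 1) * lam`_i.
Proof.
move=> hmp hA hAB hsigma [hlsz [hlsort hlcp]].
have [|Q [hQ hQd]] := symmetric_spectral _ hlsz hlcp; first by rewrite trmx_mul trmxK.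
have [V [hV hVd]] := singvals_inv_spectral hA hsigma.
set W := invmx A *m B.
have hWW : W *m W^T = invmx A *m (invmx A)^T - 1%:M := gram_invmx_mul hA hAB.
clearbody W.
pose Z := V^T *m W *m Q.
have hZ : Z *m Z^T = diag_mx (\row_j (sigma`_(m - 1 - j) ^- 2 - 1)).
  rewrite /Z !trmx_mul trmxK !mulmxA -[_ *m Q *m Q^T]mulmxA (mulmx1C hQ) mulmx1.
  rewrite -[_ *m W *m W^T]mulmxA hWW mulmxBr mulmxBl mulmx1 hV hVd.
  by apply/matrixP => i j; rewrite !mxE; case: eqP; rewrite ?mulr1n ?mulr0n ?subr0.
have -> : \tr (W *m X *m (W *m X)^T) = \tr (Z *m diag_mx (\row_k lam`_k) *m Z^T).
  have hG : Q *m diag_mx (\row_k lam`_k) *m Q^T = X *m X^T.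
    by rewrite -hQd !mulmxA (mulmx1C hQ) mul1mx -mulmxA (mulmx1C hQ) mulmx1.
  rewrite trmx_mul !mulmxA -[W *m X *m X^T]mulmxA -hG.
  have -> : Z *m diag_mx (\row_k lam`_k) *m Z^T
      = V^T *m (W *m (Q *m diag_mx (\row_k lam`_k) *m Q^T) *m W^T) *m V.
    by rewrite /Z !trmx_mul trmxK !mulmxA.
  by rewrite [RHS]mxtrace_mulC [in RHS]mulmxA (mulmx1C hV) mul1mx.
apply: (mxtrace_diag_conj_le (e := fun j => sigma`_(m - 1 - j) ^- 2 - 1)) => //.
- by move=> i j hij; rewrite lerD2r (singvals_rev_invsqr_le hA hsigma).
- by move=> i j hij; apply: sorted_ge_nth; rewrite ?hlsz.
- exact: gram_eigvals_ge0 hQd.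
Qed.

Lemma orthogonal_row_mx (R : nzRingType) n m1 m2 (U1 : 'M[R]_(n, m1)) (U2 : 'M[R]_(n, m2)) :
  orthogonal_mx (row_mx U1 U2) -> U1^T *m U1 = 1%:M /\ U1 *m U1^T + U2 *m U2^T = 1%:M.
Proof.
case=> hUTU hUUT; split; last by rewrite -hUUT tr_row_mx mul_row_col.
by move: hUTU; rewrite tr_row_mx mul_col_row (scalar_mx_block m1 m2) => /eq_block_mx[].
Qed.

Lemma selection_op_mul_tr (R : nzRingType) n m (P : 'M[R]_(n, m)) :
  selection_op P -> P^T *m P = 1%:M.
Proof.
case=> s [sinj ->]; apply/matrixP => i j; rewrite !mxE (bigD1 (s i)) //= big1 => [|k hk].
  by rewrite !mxE eqxx mul1r addr0 (inj_eq sinj).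
by rewrite !mxE (negbTE hk) mul0r.
Qed.

Lemma oblique_projector_subE (R : comUnitRingType) n m1 m2
    (U1 : 'M[R]_(n, m1)) (U2 : 'M[R]_(n, m2)) (P : 'M[R]_(n, m1)) :
  P^T *m U1 \in unitmx -> U1 *m U1^T + U2 *m U2^T = 1%:M ->
  U1 *m invmx (P^T *m U1) *m P^T - U1 *m U1^T
  = U1 *m (invmx (P^T *m U1) *m (P^T *m U2)) *m U2^T.
Proof.
move=> hA hUU.
have hPT : P^T = P^T *m U1 *m U1^T + P^T *m U2 *m U2^T.
  by rewrite -!mulmxA -mulmxDr hUU mulmx1.
rewrite [X in _ *m X - _]hPT mulmxDr !mulmxA -[_ *m P^T *m U1]mulmxA.
rewrite -[U1 *m _ *m (P^T *m U1)]mulmxA mulVmx // mulmx1.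
by rewrite addrC addKr.
Qed.

Lemma norm2sqE (R : rcfType) k (v : 'cV[R]_k) : norm2sq v = (v^T *m v) 0 0.
Proof. by rewrite -[v in _ *m v]trmxK mulmx_tr_diagE; apply: eq_bigr => j _; rewrite mxE. Qed.

Lemma sum_norm2sq_mulmx_col (R : rcfType) n k N (U : 'M[R]_(n, k)) (Y : 'M[R]_(k, N)) :
  U^T *m U = 1%:M -> \sum_(i < N) norm2sq (U *m col i Y) = \tr (Y *m Y^T).
Proof.
move=> hU; rewrite /mxtrace; under [RHS]eq_bigr do rewrite mulmx_tr_diagE.
rewrite [RHS]exchange_big /=; apply: eq_bigr => i _.
rewrite norm2sqE trmx_mul mulmxA -[_ *m U^T *m U]mulmxA hU mulmx1 -norm2sqE.
by apply: eq_bigr => j _; rewrite mxE.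
Qed.

Theorem theorem2 (R : rcfType) (n m : nat)
  (hm : (1 <= m)%N) (hmn : (m < n)%N) (h2m : (2 * m <= n)%N)
  (S : pred R) (f : R -> 'cV[R]_n)
  (U1 : 'M[R]_(n, m)) (U2 : 'M[R]_(n, n - m))
  (hU : orthogonal_mx (row_mx U1 U2))
  (hrange : forall mu, mu \in S -> ((f mu)^T <= (row_mx U1 U2)^T)%MS)
  (P : 'M[R]_(n, m)) (hP : selection_op P)
  (hinv : P^T *m U1 \in unitmx)
  (sigma : seq R) (hsigma : singvals_desc (P^T *m U1) sigma)
  (N : nat) (mus : 'I_N -> R) (hmus : forall i, mus i \in S)
  (lam : seq R)
  (hlam : eigvals_desc
            (let X := U2^T *m (\matrix_(k, i) f (mus i) k 0 : 'M[R]_(n, N)) in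
             X *m X^T) lam) :
  let fi := fun i => f (mus i) in
  let ftilde := fun i => U1 *m invmx (P^T *m U1) *m P^T *m fi i in
  let fhat := fun i => U1 *m U1^T *m fi i in
  N%:R^-1 * \sum_(i < N) norm2sq (ftilde i - fhat i)
  <= N%:R^-1 * \sum_(i < m) ((sigma`_(m - 1 - i)) ^- 2 - 1) * lam`_i.
Proof.
(* [hrange] holds for every [f] since [row_mx U1 U2] is invertible; of the size
   constraints only [m <= n - m] is needed. *)
cbv zeta.
have [hU1 hUU] := orthogonal_row_mx hU.
set F := \matrix_(k, i) f (mus i) k 0 : 'M[R]_(n, N).
have herr i : U1 *m invmx (P^T *m U1) *m P^T *m f (mus i) - U1 *m U1^T *m f (mus i)
    = U1 *m col i (invmx (P^T *m U1) *m (P^T *m U2) *m (U2^T *m F)).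
  have colF : col i F = f (mus i) by apply/matrixP => a b; rewrite !mxE (ord1 b).
  rewrite -mulmxBl (oblique_projector_subE hinv hUU) colE !mulmxA.
  by rewrite -[_ *m F *m _]mulmxA -colE colF.
under eq_bigr do rewrite herr.
rewrite sum_norm2sq_mulmx_col // ler_wpM2l ?invr_ge0 ?ler0n //.
apply: oblique_trace_le => //; first by lia.
rewrite !trmx_mul !trmxK !mulmxA -mulmxDl -!(mulmxA P^T) -mulmxDr hUU mulmx1.
exact: selection_op_mul_tr.
Qed.
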